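(* For any two distinct elements $\bar c,\bar a$ of $\mathcal C$, the line segment $\bar c\bar a$ meets $\operatorname{conv}(\frac12(d+\mathcal W))$.
   Context: Setting: $G$ compact Lie group, $K\subset G$ closed, $G/K$ connected almost effective, isotropy representation $\mathfrak p=\mathfrak p_1\oplus\cdots\oplus\mathfrak p_r$ ($r\ge2$) with pairwise inequivalent $\mathbb R$-irreducible summands, $d_i=\dim\mathfrak p_i$, $d=(d_1,\dots,d_r)$, $n=\sum d_i$. The scalar curvature of the metric $e^{q_i}Q$ on $\mathfrak p_i$ is $S(q)=\sum_{w\in\mathcal W}A_we^{w\cdot q}$, $\mathcal W\subset\mathbb Z^r$ finite, $A_w\ne0$, each $w$ of type I (one entry $-1$), type II (one entry $1$, two entries $-1$) or type III (one entry $1$, one entry $-2$), other entries $0$; $A_w>0$ for type I and $<0$ otherwise. Assume $\dim\operatorname{conv}(\mathcal W)=r-1$. $J$ is the symmetric bilinear form with $J(p,p)=\frac1{n-1}(\sum p_i)^2-\sum p_i^2/d_i$. $u=\sum_{\bar c\in\mathcal C}F_{\bar c}e^{\bar c\cdot q}$ ($\mathcal C$ finite, $F_{\bar c}\ne0$) is a superpotential: for every $\xi$, $\sum_{(\bar a,\bar c)\in\mathcal C^2,\ \bar a+\bar c=\xi}J(\bar a,\bar c)F_{\bar a}F_{\bar c}$ equals $A_w$ if $\xi=d+w$, $w\in\mathcal W$, and $0$ otherwise; $\mathcal C$ is normalised to lie in $\{\sum\bar x_i=\frac12(n-1)\}$. *)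

From HB Require Import structures.
From mathcomp Require Import all_boot all_order all_algebra.
Set Implicit Arguments. Unset Strict Implicit. Unset Printing Implicit Defensive.
Import Order.TTheory GRing.Theory Num.Theory.
Local Open Scope ring_scope.

Definition vecR (R : realFieldType) (r : nat) (w : 'rV[int]_r) : 'rV[R]_r :=
  map_mx (fun z : int => z%:~R) w.

Definition dvecR (R : realFieldType) (r : nat) (d : 'I_r -> nat) : 'rV[R]_r :=
  \row_i (d i)%:R.

Definition typeI (r : nat) (w : 'rV[int]_r) : Prop :=
  exists i : 'I_r, w ord0 i = -1 /\ forall l, l != i -> w ord0 l = 0.

Definition typeII (r : nat) (w : 'rV[int]_r) : Prop :=
  exists i j k : 'I_r, [&& i != j, i != k & j != k] /\
    [/\ w ord0 i = 1, w ord0 j = -1, w ord0 k = -1 &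
    forall l, l != i -> l != j -> l != k -> w ord0 l = 0].

Definition typeIII (r : nat) (w : 'rV[int]_r) : Prop :=
  exists i j : 'I_r, [/\ i != j, w ord0 i = 1, w ord0 j = -2 &
    forall l, l != i -> l != j -> w ord0 l = 0].

Definition Jform (R : realFieldType) (r : nat) (d : 'I_r -> nat)
    (p q : 'rV[R]_r) : R :=
  (\sum_i p ord0 i) * (\sum_i q ord0 i) / ((\sum_i d i)%N%:R - 1)
  - \sum_i p ord0 i * q ord0 i / (d i)%:R.

(* affine dimension of conv(W) (= dimension of its affine hull) equals m:
   W is nonempty and the differences w - w0 span an m-dimensional space *)
Definition conv_dim (R : realFieldType) (r : nat) (W : seq 'rV[int]_r) (m : nat)
    : Prop :=
  exists2 w0, w0 \in W &
    \rank (\matrix_(k < size W) (vecR R (nth w0 W k) - vecR R w0)) = m.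

Definition in_conv (R : realFieldType) (r : nat) (P : seq 'rV[R]_r)
    (x : 'rV[R]_r) : Prop :=
  exists lam : 'I_(size P) -> R,
    [/\ forall k, 0 <= lam k, \sum_k lam k = 1 &
        x = \sum_k lam k *: nth 0 P k].

(* u = sum_{c in C} F_c e^{c.q} is a superpotential for S = sum_{w in W} A_w e^{w.q} *)
Definition superpotential (R : realFieldType) (r : nat) (d : 'I_r -> nat)
    (W : seq 'rV[int]_r) (A : 'rV[int]_r -> R)
    (C : seq 'rV[R]_r) (F : 'rV[R]_r -> R) : Prop :=
  forall xi : 'rV[R]_r,
    let lhs := \sum_(a <- C) \sum_(c <- C | a + c == xi)
                 Jform d a c * F a * F c in
    (forall w, w \in W -> xi = dvecR R d + vecR R w -> lhs = A w) /\
    ((forall w, w \in W -> xi <> dvecR R d + vecR R w) -> lhs = 0).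

(* If the segment [cb, ab] missed conv(1/2 (d + W)), Gordan's theorem of the
   alternative (proved below by Fourier-Motzkin elimination) would give a linear
   functional y with y.p < y.cb and y.p < y.ab for every p = 1/2 (d + w).  Order C
   lexicographically with y as first key; let a1 be its largest element and a2 the
   largest element of C \ {a1}.  One of cb, ab differs from a1, so a1 and a2 also lie
   above every 1/2 (d + w) in direction y; hence none of 2 a1, a1 + a2, 2 a2 is of the
   form d + w and the superpotential equation has right-hand side 0 there.  The
   pairs of C summing to these exponents are (a1, a1); (a1, a2) and (a2, a1); and
   (a2, a2) together with pairs through a1 whose J-value is already known to vanish.
   As F does not vanish, J(a1, a1) = J(a1, a2) = J(a2, a2) = 0, so J(a1 - a2, a1 - a2)
   = 0, contradicting the negative definiteness of J on the hyperplane sum x_i = 0,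
   which contains a1 - a2. *)

From mathcomp Require Import all_boot all_order all_algebra.
From mathcomp Require Import lra ring.
Import Order.TTheory GRing.Theory Num.Theory.
Set Implicit Arguments. Unset Strict Implicit. Unset Printing Implicit Defensive.
Local Open Scope ring_scope.

Section PositiveCone.
Variables (V : zmodType) (pos : pred V).

(* [pos] is the set of positive elements of a translation-invariant total order:
   [x < y] iff [pos (y - x)]. *)
Definition positive_cone :=
  [/\ ~~ pos 0, {in pos &, forall a b, pos (a + b)} &
      forall a, a != 0 -> pos a || pos (- a)].

Definition nonneg a := (a == 0) || pos a.

Hypothesis pos_cone : positive_cone.

Lemma pos_nonnegD a b : pos a -> nonneg b -> pos (a + b).
Proof.
case: pos_cone => _ posD _ pa /orP[/eqP->|pb]; first by rewrite addr0.
exact: posD.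
Qed.

Lemma nonneg_anti a : nonneg a -> nonneg (- a) -> a = 0.
Proof.
case/orP=> [/eqP//|pa] /(pos_nonnegD pa); rewrite subrr.
by case: pos_cone => /negP.
Qed.

Lemma midpoint_below_eq m c c' :
  nonneg (m - c) -> nonneg (m - c') -> c + c' = m + m -> c = m.
Proof.
move=> mc mc' e; apply/eqP; rewrite eq_sym -subr_eq0; apply/eqP/(nonneg_anti mc).
suff -> : - (m - c) = m - c' by [].
by apply/eqP; rewrite opprB subr_eq addrAC eq_sym subr_eq e.
Qed.

Lemma sum_below_neq M m c c' :
  pos (M - m) -> nonneg (m - c) -> nonneg (m - c') -> c + c' != M + m.
Proof.
move=> Mm mc mc'; rewrite eq_sym -subr_eq0.
have := pos_nonnegD (pos_nonnegD Mm mc) mc'; rewrite subrKA opprD addrACA.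
by apply: contraTneq => ->; case: pos_cone.
Qed.

Lemma exists_cone_max (s : seq V) :
  s != [::] -> exists2 m, m \in s & {in s, forall x, nonneg (m - x)}.
Proof.
elim: s => // a s IH _; have [->|/IH[m ms Hm]] := eqVneq s [::].
  by exists a; rewrite ?mem_head // => x /[1!inE] /eqP->; rewrite /nonneg subrr eqxx.
have [ma|] := boolP (nonneg (m - a)).
  by exists m => [|x /[1!inE] /predU1P[->//|/Hm]]; rewrite ?inE ?ms ?orbT.
rewrite negb_or => /andP[ma npos]; have pam : pos (a - m).
  by case: pos_cone => _ _ /(_ _ ma); rewrite (negbTE npos) opprB.
exists a => [|x /[1!inE] /predU1P[->|/Hm xs]]; first exact: mem_head.
  by rewrite /nonneg subrr eqxx.
by rewrite /nonneg -(subrKA m) pos_nonnegD ?orbT.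
Qed.

Lemma exists_cone_top2 (s : seq V) x x' : x \in s -> x' \in s -> x != x' ->
  exists a1 a2, [/\ a1 \in s, a2 \in s, pos (a1 - a2),
    {in s, forall c, nonneg (a1 - c)} & {in s, forall c, c != a1 -> nonneg (a2 - c)}].
Proof.
move=> xs x's xx'.
have [a1 a1s max1] : exists2 a1, a1 \in s & {in s, forall c, nonneg (a1 - c)}.
  by apply: exists_cone_max; apply: contraTneq xs => ->.
have [z [zs za1]] : exists z, z \in s /\ z != a1.
  by have [e|] := eqVneq x a1; [exists x'; rewrite -e eq_sym | exists x].
have [a2 a2s1 max2] : exists2 a2, a2 \in [seq c <- s | c != a1] &
    {in [seq c <- s | c != a1], forall c, nonneg (a2 - c)}.
  have zs1 : z \in [seq c <- s | c != a1] by rewrite mem_filter za1.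
  by apply: exists_cone_max; apply: contraTneq zs1 => ->.
move: a2s1; rewrite mem_filter => /andP[a2a1 a2s].
exists a1, a2; split=> // [|c cs ca1]; last by apply: max2; rewrite mem_filter ca1.
by case/orP: (max1 _ a2s) => //; rewrite subr_eq0 eq_sym (negbTE a2a1).
Qed.

End PositiveCone.

Lemma row_neq0 (R : zmodType) k (v : 'rV[R]_k) : v != 0 -> exists i, v ord0 i != 0.
Proof. by case/matrix0Pn => i [j]; rewrite (ord1 i); exists j. Qed.

Section LexCone.
Variable R : realFieldType.

Section Refine.
Variables (V : zmodType) (f : V -> R) (pos : pred V).
Hypothesis fD : {morph f : a b / a + b}.

Definition lex_refine x := (0 < f x) || (f x == 0) && pos x.

Lemma morph_add0 : f 0 = 0.
Proof. by apply: (addrI (f 0)); rewrite -fD !addr0. Qed.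

Lemma morph_addN a : f (- a) = - f a.
Proof. by apply: (addrI (f a)); rewrite -fD !subrr morph_add0. Qed.

Lemma lex_refine_ge0 x : lex_refine x -> 0 <= f x.
Proof. by case/orP=> [/ltW|/andP[/eqP->]]. Qed.

Lemma nonneg_lex_refine_ge0 x : nonneg lex_refine x -> 0 <= f x.
Proof. by case/orP=> [/eqP->|/lex_refine_ge0]; rewrite ?morph_add0. Qed.

Lemma positive_cone_lex_refine : positive_cone pos -> positive_cone lex_refine.
Proof.
case=> pos0 posD posN; split.
- by rewrite /lex_refine morph_add0 ltxx eqxx.
- move=> a b ha hb; rewrite /lex_refine fD.
  case/orP: ha => [fa|/andP[/eqP fa pa]].
    by rewrite ltr_pwDl ?lex_refine_ge0.
  case/orP: hb => [fb|/andP[/eqP fb pb]]; first by rewrite fa add0r fb.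
  by rewrite fa fb addr0 ltxx eqxx posD.
- move=> a a0; rewrite /lex_refine morph_addN oppr_gt0 oppr_eq0.
  by case: ltrgtP => //= _; apply: posN.
Qed.

End Refine.

Definition lexpos_at k (v : 'rV[R]_k) (i : 'I_k) :=
  [forall j : 'I_k, (j < i)%N ==> (v ord0 j == 0)] && (0 < v ord0 i).

Definition lexpos k (v : 'rV[R]_k) := [exists i, lexpos_at v i].

Lemma lexpos_atD k (a b : 'rV[R]_k) (i1 i2 : 'I_k) : (i1 <= i2)%N ->
  lexpos_at a i1 -> lexpos_at b i2 -> lexpos_at (a + b) i1.
Proof.
move=> le /andP[/forallP a0 a1] /andP[/forallP b0 b2]; apply/andP; split.
  apply/forallP=> j; apply/implyP=> ji; rewrite mxE.
  by rewrite (eqP (implyP (a0 j) ji)) (eqP (implyP (b0 j) (leq_trans ji le))) addr0.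
rewrite mxE ltr_pwDl //; case: (ltngtP i1 i2) le => // [lt|/val_inj->] _.
  by rewrite (eqP (implyP (b0 i1) lt)).
exact: ltW.
Qed.

Lemma positive_cone_lexpos k : positive_cone (@lexpos k).
Proof.
split.
- by apply/existsP=> -[i /andP[_]]; rewrite mxE ltxx.
- move=> a b /existsP[i1 ha] /existsP[i2 hb]; apply/existsP.
  have [le|/ltnW le] := leqP i1 i2; first by exists i1; apply: lexpos_atD ha hb.
  by exists i2; rewrite addrC; apply: lexpos_atD hb ha.
- move=> v /row_neq0[i vi].
  case: (@arg_minnP _ i (fun j => v ord0 j != 0) val vi) => {vi}i vi imin.
  have low : [forall j : 'I_k, (j < i)%N ==> (v ord0 j == 0)].
    by apply/forallP=> j; apply/implyP; apply: contraTT => /imin; rewrite leqNgt.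
  apply/orP; case: (ltrgtP (v ord0 i) 0) vi => // vi _; [right|left]; apply/existsP; exists i.
    apply/andP; split; last by rewrite mxE oppr_gt0.
    by apply/forallP=> j; apply/implyP=> ji; rewrite mxE oppr_eq0 (implyP (forallP low j)).
  by rewrite /lexpos_at low.
Qed.

End LexCone.

Lemma exists_between (R : realFieldType) (L U : seq R) :
  {in L & U, forall l u, l < u} ->
  exists s, {in L, forall l, l < s} /\ {in U, forall u, s < u}.
Proof.
move=> LU; pose lo := \big[Order.max/(\big[Order.min/0]_(u <- U) u - 1)]_(l <- L) l.
pose hi := \big[Order.min/(lo + 1)]_(u <- U) u.
have lo_lt : {in U, forall u, lo < u}.
  move=> u uU; rewrite /lo big_seq_cond bigmax_lt // => [|l /andP[lL _]]; last exact: LU.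
  have := ge_bigmin_seq 0 u xpredT id uU isT; lra.
have lohi : lo < hi by rewrite /hi big_seq_cond lt_bigmin ?ltrDl ?ltr01 // => u /andP[/lo_lt].
exists ((lo + hi) / 2); split => [l lL|u uU].
  exact: le_lt_trans (le_bigmax_seq _ l xpredT id lL isT) (midf_lt lohi).1.
exact: lt_le_trans (midf_lt lohi).2 (ge_bigmin_seq _ u xpredT id uU isT).
Qed.

Lemma psumr_gt0_has (R : numDomainType) (I : eqType) (s : seq I) (F : I -> R) :
  {in s, forall i, 0 <= F i} -> has (fun i => 0 < F i) s -> 0 < \sum_(i <- s) F i.
Proof.
move=> F0 /hasP[i si Fi]; rewrite big_seq lt_def sumr_ge0 ?andbT => [|j /F0//].
by rewrite psumr_neq0 => [|j /F0//]; apply/hasP; exists i; rewrite ?si.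
Qed.

Section Gordan.
Variables (R : realFieldType) (r : nat).
Implicit Types (D : seq 'rV[R]_r) (u v x y : 'rV[R]_r) (mu : 'rV[R]_r -> R).

Definition dot y x := \sum_i y ord0 i * x ord0 i.

Lemma dotDr y u v : dot y (u + v) = dot y u + dot y v.
Proof. by rewrite /dot -big_split; apply: eq_bigr => i _; rewrite mxE mulrDr. Qed.

Lemma dotZr y x a : dot y (a *: x) = a * dot y x.
Proof. by rewrite /dot mulr_sumr; apply: eq_bigr => i _; rewrite mxE mulrCA. Qed.

Lemma dotBr y u v : dot y (u - v) = dot y u - dot y v.
Proof. by rewrite dotDr -scaleN1r dotZr mulN1r. Qed.

Lemma dotDl y u v : dot (u + v) y = dot u y + dot v y.
Proof. by rewrite /dot -big_split; apply: eq_bigr => i _; rewrite mxE mulrDl. Qed.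

Lemma dotZl y x a : dot (a *: y) x = a * dot y x.
Proof. by rewrite /dot mulr_sumr; apply: eq_bigr => i _; rewrite mxE mulrA. Qed.

Lemma dot_delta j x : dot (delta_mx ord0 j) x = x ord0 j.
Proof.
rewrite /dot (bigD1 j) //= mxE !eqxx mul1r big1 ?addr0 // => i ij.
by rewrite mxE (negbTE ij) andbF mul0r.
Qed.

Definition positive_on y D := {in D, forall v, 0 < dot y v}.

Definition conic_dependency D mu :=
  [/\ forall v, 0 <= mu v, has (fun v => 0 < mu v) D & \sum_(v <- D) mu v *: v = 0].

Section FourierMotzkin.
Variables (j : 'I_r) (D : seq 'rV[R]_r).

Let Z := [seq v : 'rV[R]_r <- D | v ord0 j == 0].
Let P := [seq v : 'rV[R]_r <- D | 0 < v ord0 j].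
Let N := [seq v : 'rV[R]_r <- D | v ord0 j < 0].

Definition fm_comb u v := (- v ord0 j) *: u + u ord0 j *: v.

Definition fm_elim := Z ++ [seq fm_comb u v | u <- P, v <- N].

Lemma fm_elim_coord i v :
  (i == j) || all (fun u => u ord0 i == 0) D -> v \in fm_elim -> v ord0 i = 0.
Proof.
move=> hi; rewrite /fm_elim mem_cat => /orP[|/allpairsP[[p q] [/= pP qN ->]]].
  rewrite mem_filter => /andP[/eqP vj vD].
  by case/orP: hi => [/eqP->//|/allP/(_ v vD)/eqP].
move: pP qN; rewrite !mem_filter => /andP[_ pD] /andP[_ qD].
case/orP: hi => [/eqP->|/allP D0]; first by rewrite !mxE; ring.
by rewrite !mxE (eqP (D0 p pD)) (eqP (D0 q qD)) !mulr0 addr0.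
Qed.

Lemma fm_lift_positive y' : positive_on y' fm_elim -> exists y, positive_on y D.
Proof.
move=> y'pos.
pose L := [seq - dot y' p / p ord0 j | p <- P].
pose U := [seq dot y' q / - q ord0 j | q <- N].
have [s [Ls Us]] : exists s, {in L, forall l, l < s} /\ {in U, forall t, s < t}.
  apply: exists_between => _ _ /mapP[p pP ->] /mapP[q qN ->].
  have : 0 < dot y' (fm_comb p q).
    by apply: y'pos; rewrite mem_cat allpairs_f ?orbT.
  move: pP qN; rewrite !mem_filter dotDr !dotZr => /andP[p0 _] /andP[q0 _].
  rewrite -oppr_gt0 in q0; rewrite ltr_pdivrMr // mulrAC ltr_pdivlMr //; nra.
exists (y' + s *: delta_mx ord0 j) => v vD; rewrite dotDl dotZl dot_delta.
case: (ltrgtP (v ord0 j) 0) => v0.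
- have vN : v \in N by rewrite mem_filter v0.
  have := Us _ (map_f (fun q => dot y' q / - q ord0 j) vN).
  rewrite ltr_pdivlMr ?oppr_gt0 //; nra.
- have vP : v \in P by rewrite mem_filter v0.
  have := Ls _ (map_f (fun p => - dot y' p / p ord0 j) vP).
  rewrite ltr_pdivrMr //; nra.
- by rewrite v0 mulr0 addr0 y'pos // mem_cat mem_filter v0 eqxx vD.
Qed.

Lemma fm_lift_dependency mu' :
  conic_dependency fm_elim mu' -> exists mu, conic_dependency D mu.
Proof.
case=> mu'0 /hasP[x xE mu'x] mu'sum.
have Pj p : p \in P -> 0 < p ord0 j by rewrite mem_filter => /andP[].
have Nj q : q \in N -> q ord0 j < 0 by rewrite mem_filter => /andP[].
pose mu v := if v ord0 j == 0 then mu' v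
  else if 0 < v ord0 j then \sum_(q <- N) mu' (fm_comb v q) * - q ord0 j
  else \sum_(p <- P) mu' (fm_comb p v) * p ord0 j.
have muP p : p \in P -> mu p = \sum_(q <- N) mu' (fm_comb p q) * - q ord0 j.
  by move=> /Pj p0; rewrite /mu (gt_eqF p0) p0.
have muN q : q \in N -> mu q = \sum_(p <- P) mu' (fm_comb p q) * p ord0 j.
  by move=> /Nj q0; rewrite /mu (lt_eqF q0) ltNge (ltW q0).
exists mu; split.
- move=> v; rewrite /mu; case: ifP => _; first exact: mu'0.
  case: ifP => _; rewrite big_seq sumr_ge0 // => w.
    by move=> /Nj w0; rewrite mulr_ge0 ?mu'0 ?oppr_ge0 ?ltW.
  by move=> /Pj w0; rewrite mulr_ge0 ?mu'0 ?ltW.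
- move: xE mu'x; rewrite mem_cat => /orP[xZ|/allpairsP[[p q] [/= pP qN ->]]] mu'x.
    move: xZ; rewrite mem_filter => /andP[x0 xD].
    by apply/hasP; exists x; rewrite // /mu x0.
  apply/hasP; exists p; first by move: pP; rewrite mem_filter => /andP[].
  rewrite muP //; apply: psumr_gt0_has => [q' /Nj q'0|].
    by rewrite mulr_ge0 ?mu'0 ?oppr_ge0 ?ltW.
  by apply/hasP; exists q; rewrite // mulr_gt0 ?oppr_gt0 ?Nj.
- have split_sign (g : 'rV[R]_r -> 'rV[R]_r) : \sum_(v <- D) g v =
      \sum_(v <- Z) g v + (\sum_(v <- P) g v + \sum_(v <- N) g v).
    rewrite !big_filter (bigID (fun v => v ord0 j == 0)); congr (_ + _).
    rewrite (bigID (fun v => 0 < v ord0 j)).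
    by congr (_ + _); apply: eq_bigl => v /=; case: ltrgtP.
  apply: etrans mu'sum; rewrite split_sign /fm_elim big_cat big_allpairs_dep /=; congr (_ + _).
    by apply: eq_big_seq => v; rewrite mem_filter /mu => /andP[->].
  have -> : \sum_(v <- P) mu v *: v =
      \sum_(p <- P) \sum_(q <- N) (mu' (fm_comb p q) * - q ord0 j) *: p.
    by apply: eq_big_seq => p /muP->; rewrite scaler_suml.
  have -> : \sum_(v <- N) mu v *: v =
      \sum_(p <- P) \sum_(q <- N) (mu' (fm_comb p q) * p ord0 j) *: q.
    by rewrite exchange_big; apply: eq_big_seq => q /muN->; rewrite scaler_suml.
  rewrite -big_split; apply: eq_bigr => p _; rewrite -big_split; apply: eq_bigr => q _.
  by rewrite /fm_comb scalerDr !scalerA.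
Qed.

End FourierMotzkin.

Lemma gordan D : (exists y, positive_on y D) \/ (exists mu, conic_dependency D mu).
Proof.
suff gordan_support k D' : (forall i : 'I_r, (k <= i)%N -> all (fun v => v ord0 i == 0) D') ->
    (exists y, positive_on y D') \/ (exists mu, conic_dependency D' mu).
  by apply: (gordan_support r) => i; rewrite leqNgt ltn_ord.
elim: k D' => [|k IH] D' supp.
  case: D' supp => [|v0 D'] supp; first by left; exists 0.
  right; exists (fun=> 1); split; rewrite /= ?ltr01 //.
  rewrite big1_seq // => v /andP[_ vD]; rewrite scale1r; apply/rowP => i.
  by rewrite mxE; apply/eqP/(allP (supp i isT)).
have [kr|rk] := ltnP k r; last first.
  by apply: IH => i; rewrite leqNgt (leq_trans (ltn_ord i) rk).
have supp' (i : 'I_r) : (k <= i)%N -> all (fun v => v ord0 i == 0) (fm_elim (Ordinal kr) D').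
  move=> ki; apply/allP => v vE; apply/eqP; apply: fm_elim_coord vE.
  by case: eqVneq ki => [//|/= ne ki]; rewrite supp // ltn_neqAle eq_sym ne ki.
have [[y' hy']|[mu' hmu']] := IH _ supp'.
- by left; apply: fm_lift_positive hy'.
- by right; apply: fm_lift_dependency hmu'.
Qed.

End Gordan.

Lemma in_conv_weights (R : realFieldType) r (P : seq 'rV[R]_r) (lam : 'rV[R]_r -> R) :
  (forall p, 0 <= lam p) -> \sum_(p <- P) lam p = 1 -> in_conv P (\sum_(p <- P) lam p *: p).
Proof.
move=> lam0 lam1; exists (fun k => lam (nth 0 P k)).
by split=> //; rewrite -?lam1 (big_nth 0) big_mkord.
Qed.

Section Segment.
Variables (R : realFieldType) (r : nat) (b0 b1 : 'rV[R]_r) (P : seq 'rV[R]_r).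

Let D := [seq b0 - p | p <- P] ++ [seq b1 - p | p <- P].

Lemma conic_dependency_segment mu : conic_dependency D mu ->
  exists2 t, 0 <= t <= 1 & in_conv P ((1 - t) *: b0 + t *: b1).
Proof.
case=> mu0 muD musum.
pose a := \sum_(p <- P) mu (b0 - p); pose b := \sum_(p <- P) mu (b1 - p).
pose lam p := (mu (b0 - p) + mu (b1 - p)) / (a + b).
have ab0 : 0 < a + b.
  move: muD; rewrite has_cat !has_map => /orP[] /(psumr_gt0_has (fun p _ => mu0 _)) => ?.
    by rewrite ltr_pwDl ?sumr_ge0.
  by rewrite ltr_wpDl ?sumr_ge0.
have comb : a *: b0 + b *: b1 = \sum_(p <- P) (mu (b0 - p) + mu (b1 - p)) *: p.
  have sum_shift c : \sum_(p <- P) mu (c - p) *: (c - p) =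
      (\sum_(p <- P) mu (c - p)) *: c - \sum_(p <- P) mu (c - p) *: p.
    by rewrite scaler_suml -sumrB; apply: eq_bigr => p _; rewrite scalerBr.
  have -> : \sum_(p <- P) (mu (b0 - p) + mu (b1 - p)) *: p =
      \sum_(p <- P) mu (b0 - p) *: p + \sum_(p <- P) mu (b1 - p) *: p.
    by rewrite -big_split; apply: eq_bigr => p _; rewrite scalerDl.
  apply/eqP; rewrite -subr_eq0; apply/eqP; rewrite -[RHS]musum big_cat /= !big_map.
  by rewrite !sum_shift opprD addrACA.
exists (b / (a + b)).
  by rewrite divr_ge0 ?sumr_ge0 ?(ltW ab0) //= ler_pdivrMr // mul1r ler_wpDl ?sumr_ge0.
have -> : (1 - b / (a + b)) *: b0 + b / (a + b) *: b1 = \sum_(p <- P) lam p *: p.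
  rewrite /lam; under eq_bigr do rewrite mulrC -scalerA.
  rewrite -scaler_sumr -comb scalerDr !scalerA; congr (_ *: _ + _ *: _); last exact: mulrC.
  by rewrite [RHS]mulrC -[X in X - _](@divff _ (a + b)) ?gt_eqF // -mulrBl addrK.
apply: in_conv_weights => [p|]; rewrite /lam.
  by rewrite divr_ge0 ?(ltW ab0) ?addr_ge0 ?mu0.
by rewrite -big_distrl big_split /= -/a -/b divff ?gt_eqF.
Qed.

Lemma segment_meets_conv_or_separated :
  (exists y, {in P, forall p, dot y p < dot y b0 /\ dot y p < dot y b1}) \/
  exists2 t, 0 <= t <= 1 & in_conv P ((1 - t) *: b0 + t *: b1).
Proof.
have [[y ypos]|[mu /conic_dependency_segment]] := gordan D; [left|by right].
exists y => p pP; rewrite -[_ < dot y b0]subr_gt0 -[_ < dot y b1]subr_gt0 -!dotBr.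
by split; apply: ypos; rewrite mem_cat ?(map_f (fun q => b0 - q)) ?(map_f (fun q => b1 - q)) ?orbT.
Qed.

End Segment.

Section Jform.
Variables (R : realFieldType) (r : nat) (d : 'I_r -> nat).
Implicit Types (p q x : 'rV[R]_r).

Lemma JformC p q : Jform d p q = Jform d q p.
Proof.
rewrite /Jform [(\sum_i p _ _) * _]mulrC; congr (_ - _).
by apply: eq_bigr => i _; rewrite [p _ _ * _]mulrC.
Qed.

Lemma JformDr p q x : Jform d p (q + x) = Jform d p q + Jform d p x.
Proof.
rewrite /Jform.
have -> : \sum_i (q + x) ord0 i = \sum_i q ord0 i + \sum_i x ord0 i.
  by rewrite -big_split; apply: eq_bigr => i _; rewrite mxE.
have -> : \sum_i p ord0 i * (q + x) ord0 i / (d i)%:R =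
    \sum_i p ord0 i * q ord0 i / (d i)%:R + \sum_i p ord0 i * x ord0 i / (d i)%:R.
  by rewrite -big_split; apply: eq_bigr => i _; rewrite mxE mulrDr mulrDl.
ring.
Qed.

Lemma JformBr p q x : Jform d p (q - x) = Jform d p q - Jform d p x.
Proof. by rewrite JformDr (morph_addN (JformDr p)). Qed.

Lemma JformBl p q x : Jform d (q - x) p = Jform d q p - Jform d x p.
Proof. by rewrite JformC JformBr !(JformC p). Qed.

Lemma Jform_lt0 x : (forall i, (0 < d i)%N) -> \sum_i x ord0 i = 0 -> x != 0 ->
  Jform d x x < 0.
Proof.
move=> d0 x_sum0 x0; rewrite /Jform x_sum0 !mul0r sub0r oppr_lt0.
have [i xi] := row_neq0 x0.
apply: psumr_gt0_has => [k _|]; first by rewrite -expr2 divr_ge0 ?sqr_ge0 ?ler0n.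
apply/hasP; exists i; first by rewrite mem_index_enum.
by rewrite -expr2 divr_gt0 ?ltr0n ?d0 // lt_def sqrf_eq0 xi sqr_ge0.
Qed.

End Jform.

Section Superpotential.
Variables (R : realFieldType) (r : nat) (d : 'I_r -> nat) (W : seq 'rV[int]_r)
  (A : 'rV[int]_r -> R) (C : seq 'rV[R]_r) (F : 'rV[R]_r -> R).
Hypotheses (C_uniq : uniq C) (F_neq0 : forall c, c \in C -> F c != 0)
  (C_super : superpotential d W A C F) (d_gt0 : forall i, (0 < d i)%N)
  (C_sum : forall c, c \in C -> \sum_i c ord0 i = ((\sum_i d i)%N%:R - 1) / 2).
Implicit Types (a c m xi y : 'rV[R]_r).

Definition sp_coef xi := \sum_(a <- C) \sum_(c <- C | a + c == xi) Jform d a c * F a * F c.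

Lemma sp_coefE xi : sp_coef xi =
  \sum_(a <- C) if xi - a \in C then Jform d a (xi - a) * F a * F (xi - a) else 0.
Proof.
apply: eq_bigr => a _; rewrite (eq_bigl (pred1 (xi - a))) => [|c]; last first.
  by apply/eqP/eqP => [<-|->]; rewrite addrC ?addKr ?subrK.
case: ifP => xiaC; first by rewrite -big_filter filter_pred1_uniq // big_seq1.
by rewrite big1_seq // => c /andP[/eqP-> cC]; rewrite cC in xiaC.
Qed.

Lemma Jform_eq0_of_sp_coef m m' : m \in C -> m' \in C -> sp_coef (m + m') = 0 ->
  {in C, forall a, m + m' - a \in C -> a != m -> a != m' -> Jform d a (m + m' - a) = 0} ->
  Jform d m m' = 0.
Proof.
move=> mC m'C; rewrite sp_coefE => coef0 Jrest.
pose T a := if m + m' - a \in C then Jform d a (m + m' - a) * F a * F (m + m' - a) else 0.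
have Tm : T m = Jform d m m' * F m * F m' by rewrite /T [m + m']addrC addrK m'C.
have Tm' : T m' = Jform d m m' * F m * F m' by rewrite /T addrK mC JformC mulrAC.
have Trest a : a \in C -> a != m -> a != m' -> T a = 0.
  by move=> aC am am'; rewrite /T; case: ifP => // ?; rewrite Jrest // !mul0r.
have FmFm' : F m * F m' != 0 by rewrite mulf_neq0 ?F_neq0.
have : \sum_(a <- C) T a = 0 := coef0.
rewrite (bigD1_seq m) //= Tm.
have [em|m'm] := eqVneq m' m.
  rewrite big1_seq ?addr0 => [|a /andP[am aC]]; last by rewrite Trest // em.
  by move/eqP; rewrite -mulrA mulf_eq0 (negbTE FmFm') orbF => /eqP.
rewrite -big_filter (bigD1_seq m') ?filter_uniq ?mem_filter ?m'm ?m'C //= Tm'.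
rewrite big1_seq ?addr0 => [|a /andP[am']]; last first.
  by rewrite mem_filter => /andP[am aC]; rewrite Trest.
by move/eqP; rewrite -mulr2n mulrn_eq0 /= -mulrA mulf_eq0 (negbTE FmFm') orbF => /eqP.
Qed.

Definition half_weight (w : 'rV[int]_r) : 'rV[R]_r := 2%:R^-1 *: (dvecR R d + vecR R w).

Lemma sp_coef_eq0_above y c xi :
  {in [seq half_weight w | w <- W], forall p, dot y p < dot y c} ->
  2%:R * dot y c <= dot y xi -> sp_coef xi = 0.
Proof.
move=> c_above xi_high; case: (C_super xi) => _; apply=> w wW xiE.
by move: (c_above _ (map_f _ wW)) xi_high; rewrite /half_weight dotZr -xiE; lra.
Qed.

Lemma Jform_top_pair_eq0 (pos : pred 'rV[R]_r) a1 a2 : positive_cone pos ->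
  a1 \in C -> a2 \in C -> pos (a1 - a2) ->
  {in C, forall c, nonneg pos (a1 - c)} ->
  {in C, forall c, c != a1 -> nonneg pos (a2 - c)} ->
  sp_coef (a1 + a1) = 0 -> sp_coef (a1 + a2) = 0 -> sp_coef (a2 + a2) = 0 ->
  Jform d (a1 - a2) (a1 - a2) = 0.
Proof.
move=> cone a1C a2C p12 max1 max2 c11 c12 c22.
have J11 : Jform d a1 a1 = 0.
  apply: Jform_eq0_of_sp_coef c11 _ => // a aC a'C aa1 _.
  by rewrite (midpoint_below_eq cone (max1 _ aC) (max1 _ a'C) (subrKC _ _)) eqxx in aa1.
have J12 : Jform d a1 a2 = 0.
  apply: Jform_eq0_of_sp_coef c12 _ => // a aC a'C aa1 aa2.
  have a'a1 : a1 + a2 - a != a1 by rewrite subr_eq (inj_eq (addrI _)) eq_sym.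
  by have := sum_below_neq cone p12 (max2 _ aC aa1) (max2 _ a'C a'a1); rewrite subrKC eqxx.
have J22 : Jform d a2 a2 = 0.
  apply: Jform_eq0_of_sp_coef c22 _ => // a aC a'C aa2 _.
  have J1 : Jform d a1 (a2 + a2 - a1) = 0 by rewrite JformBr JformDr J12 J11 addr0 subr0.
  have [->//|aa1] := eqVneq a a1.
  have [e|a'a1] := eqVneq (a2 + a2 - a) a1.
    by rewrite e JformC -[a](subKr (a2 + a2)) e.
  by rewrite (midpoint_below_eq cone (max2 _ aC aa1) (max2 _ a'C a'a1) (subrKC _ _)) eqxx in aa2.
by rewrite JformBl !JformBr J11 J12 J22 (JformC d a2 a1) J12 !subrr.
Qed.

Lemma exponents_above_half_weights_eq y cb ab : cb \in C -> ab \in C ->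
  {in [seq half_weight w | w <- W], forall p, dot y p < dot y cb} ->
  {in [seq half_weight w | w <- W], forall p, dot y p < dot y ab} -> cb = ab.
Proof.
move=> cbC abC cb_above ab_above; have [//|cbab] := eqVneq cb ab; exfalso.
pose pos := lex_refine (dot y) (@lexpos R r).
have cone : positive_cone pos := positive_cone_lex_refine (dotDr y) (@positive_cone_lexpos R r).
have [a1 [a2 [a1C a2C p12 max1 max2]]] := exists_cone_top2 cone cbC abC cbab.
have [x [xC xa1 x_above]] : exists x, [/\ x \in C, x != a1 &
    {in [seq half_weight w | w <- W], forall p, dot y p < dot y x}].
  by have [e|] := eqVneq cb a1; [exists ab; rewrite -e eq_sym | exists cb].
have x_a2 : dot y x <= dot y a2.
  by rewrite -subr_ge0 -dotBr; apply: (nonneg_lex_refine_ge0 (dotDr y)); apply: max2.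
have a2_a1 : dot y a2 <= dot y a1.
  by rewrite -subr_ge0 -dotBr; apply: lex_refine_ge0 p12.
have high c c' : dot y x <= dot y c -> dot y x <= dot y c' -> sp_coef (c + c') = 0.
  by move=> xc xc'; apply: sp_coef_eq0_above x_above _; rewrite dotDr; lra.
have sum_a12 : \sum_i (a1 - a2) ord0 i = 0.
  rewrite (eq_bigr (fun i => a1 ord0 i - a2 ord0 i)) => [|i _]; last by rewrite !mxE.
  by rewrite sumrB !C_sum ?subrr.
have a12 : a1 - a2 != 0 by apply: contraTneq p12 => ->; case: cone.
have x_a1 : dot y x <= dot y a1 := le_trans x_a2 a2_a1.
have := Jform_lt0 d_gt0 sum_a12 a12.
by rewrite (Jform_top_pair_eq0 cone a1C a2C p12 max1 max2) ?high ?ltxx.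
Qed.

End Superpotential.

Theorem corollary3p4 (R : realFieldType) (r : nat) (d : 'I_r -> nat)
    (W : seq 'rV[int]_r) (A : 'rV[int]_r -> R)
    (C : seq 'rV[R]_r) (F : 'rV[R]_r -> R) :
  (2 <= r)%N ->
  (forall i, (0 < d i)%N) ->
  uniq W ->
  (forall w, w \in W -> A w != 0) ->
  (forall w, w \in W -> [/\ typeI w -> 0 < A w,
                            typeII w -> A w < 0 &
                            typeIII w -> A w < 0]) ->
  (forall w, w \in W -> typeI w \/ typeII w \/ typeIII w) ->
  conv_dim R W r.-1 ->
  uniq C ->
  (forall c, c \in C -> F c != 0) ->
  superpotential d W A C F ->
  (forall c, c \in C -> \sum_i c ord0 i = ((\sum_i d i)%N%:R - 1) / 2) ->
  forall cb ab, cb \in C -> ab \in C -> cb != ab ->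
  exists2 t : R, 0 <= t <= 1 &
    in_conv [seq (2%:R)^-1 *: (dvecR R d + vecR R w) | w <- W]
            ((1 - t) *: cb + t *: ab).
Proof.
move=> _ d_gt0 _ _ _ _ _ C_uniq F_neq0 C_super C_sum cb ab cbC abC cbab.
have [[y y_sep]|//] := segment_meets_conv_or_separated cb ab
  [seq half_weight R d w | w <- W].
suff eq_cbab : cb = ab by rewrite eq_cbab eqxx in cbab.
by apply: (exponents_above_half_weights_eq C_uniq F_neq0 C_super d_gt0 C_sum cbC abC (y := y))
  => p /y_sep[].
Qed.
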